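(* Let $(A_{i,r})$ be a double complex in an abelian category $\mathcal{A}$ all of whose rows and columns are exact and which is weakly bounded (e.g. $A_{i,r}=0$ whenever $i<0$ or $r<0$), and let $\Sigma:\mathcal{A}^{\mathbb{Z}}\to\mathcal{B}$ be any exact functor to an abelian category $\mathcal{B}$ with a functorial isomorphism $\Sigma_i X_i\cong\Sigma_i X_{i+1}$. Then all total homology objects $H^{\mathrm{tot}}(A_n)$ of the total complex with respect to $\Sigma$ are zero.
   Context: A double complex in $\mathcal{A}$ is a family of objects $A_{i,r}$ $(i,r\in\mathbb{Z})$ ($i$ = row index, increasing downward; $r$ = column index, increasing rightward) with vertical maps $\delta_1:A_{i,r}\to A_{i+1,r}$ and horizontal maps $\delta_2:A_{i,r}\to A_{i,r+1}$ such that $\delta_1\delta_1=0$, $\delta_2\delta_2=0$, $\delta_1\delta_2=\delta_2\delta_1$; a row/column is exact if its homology vanishes everywhere. For an object $A$ of it, with $d,e$ the horizontal maps into/out of $A$, $c,f$ the vertical maps into/out of $A$, $p$ the composite of two arrows ending at $A$ and $q$ the composite of two arrows starting at $A$, the receptor is ${}^\square A=(\ker e\cap\ker f)/\operatorname{im}p$ and the donor is $A_\square=\ker q/(\operatorname{im}c+\operatorname{im}d)$. The double complex is weakly bounded if for every $r,s$ there is a positive integer $n$ such that ${}^\square A_{r-n,s+n}=0$ or $(A_{r-n-1,s+n})_\square=0$, and also a negative integer $n$ with the same property. $\mathcal{A}^{\mathbb{Z}}$ is the category of $\mathbb{Z}$-indexed families of objects of $\mathcal{A}$. The total complex has $A_n=\Sigma_i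 A_{i,n-i}$, with differential $\delta=\delta_2+(-1)^n\delta_1:A_n\to A_{n+1}$, where $\delta_1,\delta_2:A_n\to A_{n+1}$ are induced by the vertical and horizontal maps (using the shift isomorphism for $\delta_1$); $H^{\mathrm{tot}}(A_n)=\ker(\delta:A_n\to A_{n+1})/\operatorname{im}(\delta:A_{n-1}\to A_n)$. *)

From HB Require Import structures.
From mathcomp Require Import all_boot all_order all_algebra.
Set Implicit Arguments. Unset Strict Implicit. Unset Printing Implicit Defensive.
Import GRing.Theory.
Local Open Scope ring_scope.

Record AbCat := {
  Obj : Type;
  Hom : Obj -> Obj -> zmodType;
  comp : forall a b c, Hom b c -> Hom a b -> Hom a c;   (* comp g f = g o f *)
  idm : forall a, Hom a a;
  compA : forall a b c d (h : Hom c d) (g : Hom b c) (f : Hom a b),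
      comp h (comp g f) = comp (comp h g) f;
  comp1m : forall a b (f : Hom a b), comp (idm b) f = f;
  compm1 : forall a b (f : Hom a b), comp f (idm a) = f;
  compDl : forall a b c (g g' : Hom b c) (f : Hom a b),
      comp (g + g') f = comp g f + comp g' f;
  compDr : forall a b c (g : Hom b c) (f f' : Hom a b),
      comp g (f + f') = comp g f + comp g f';
  zeroO : Obj;
  zeroO_init : forall b (f : Hom zeroO b), f = 0;
  zeroO_term : forall b (f : Hom b zeroO), f = 0;
  bpO : Obj -> Obj -> Obj;
  bp_inl : forall a b, Hom a (bpO a b);
  bp_inr : forall a b, Hom b (bpO a b);
  bp_pl : forall a b, Hom (bpO a b) a;
  bp_pr : forall a b, Hom (bpO a b) b;
  bp_pl_inl : forall a b, comp (bp_pl a b) (bp_inl a b) = idm a;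
  bp_pr_inr : forall a b, comp (bp_pr a b) (bp_inr a b) = idm b;
  bp_pl_inr : forall a b, comp (bp_pl a b) (bp_inr a b) = 0;
  bp_pr_inl : forall a b, comp (bp_pr a b) (bp_inl a b) = 0;
  bp_sum : forall a b, comp (bp_inl a b) (bp_pl a b)
                     + comp (bp_inr a b) (bp_pr a b) = idm (bpO a b);
  kerO : forall a b, Hom a b -> Obj;
  kerM : forall a b (f : Hom a b), Hom (kerO f) a;
  kerLift : forall a b (f : Hom a b) t, Hom t a -> Hom t (kerO f);
  kerM_comp : forall a b (f : Hom a b), comp f (kerM f) = 0;
  kerLift_spec : forall a b (f : Hom a b) t (x : Hom t a),
      comp f x = 0 -> comp (kerM f) (kerLift f x) = x;
  kerM_mono : forall a b (f : Hom a b) t (y y' : Hom t (kerO f)),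
      comp (kerM f) y = comp (kerM f) y' -> y = y';
  cokO : forall a b, Hom a b -> Obj;
  cokM : forall a b (f : Hom a b), Hom b (cokO f);
  cokDesc : forall a b (f : Hom a b) t, Hom b t -> Hom (cokO f) t;
  cokM_comp : forall a b (f : Hom a b), comp (cokM f) f = 0;
  cokDesc_spec : forall a b (f : Hom a b) t (x : Hom b t),
      comp x f = 0 -> comp (cokDesc f x) (cokM f) = x;
  cokM_epi : forall a b (f : Hom a b) t (y y' : Hom (cokO f) t),
      comp y (cokM f) = comp y' (cokM f) -> y = y';
  mono_is_kernel : forall a b (m : Hom a b),
      (forall t (x y : Hom t a), comp m x = comp m y -> x = y) ->
      forall t (x : Hom t b), comp (cokM m) x = 0 ->
      exists y : Hom t a, comp m y = x;
  epi_is_cokernel : forall a b (e : Hom a b),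
      (forall t (x y : Hom b t), comp x e = comp y e -> x = y) ->
      forall t (x : Hom a t), comp x (kerM e) = 0 ->
      exists y : Hom b t, comp y e = x
}.
(* (uniqueness of the factorisations in the last two axioms follows from
    mono/epi-ness, so only existence is required) *)

Arguments Hom : clear implicits.
Arguments comp {_ _ _ _}.
Arguments idm {_}.
Arguments kerO {_ _ _}.
Arguments kerM {_ _ _}.
Arguments kerLift {_ _ _} _ {_}.
Arguments cokO {_ _ _}.
Arguments cokM {_ _ _}.
Arguments bpO {_}.
Arguments bp_inl {_ _ _}.
Arguments bp_inr {_ _ _}.
Arguments bp_pl {_ _ _}.
Arguments bp_pr {_ _ _}.
Arguments zeroO {_}.

Section AbCatDefs.
Variable C : AbCat.

Definition isZeroObj (X : Obj C) : Prop :=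
  (forall Y (f : Hom C X Y), f = 0) /\ (forall Y (f : Hom C Y X), f = 0).

(* exactness of  a --f--> b --g--> c  at b : gf = 0 and im f = ker g *)
Definition exactAt (a b c : Obj C) (f : Hom C a b) (g : Hom C b c) : Prop :=
  comp g f = 0 /\ comp (cokM f) (kerM g) = 0.

Definition pairM (a b c : Obj C) (e : Hom C a b) (f : Hom C a c)
  : Hom C a (bpO b c) := comp bp_inl e + comp bp_inr f.
Definition copairM (x y a : Obj C) (c : Hom C x a) (d : Hom C y a)
  : Hom C (bpO x y) a := comp c bp_pl + comp d bp_pr.

Definition castF (F : int -> Obj C) (m n : int) (e : m = n) : Hom C (F m) (F n) :=
  match e in _ = k return Hom C (F m) (F k) with erefl => idm (F m) end.
End AbCatDefs.

Arguments isZeroObj {C}.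
Arguments exactAt {C a b c}.
Arguments pairM {C a b c}.
Arguments copairM {C x y a}.
Arguments castF {C} F {m n} e.

(* objects of A^Z : Z-indexed families; morphisms : families of maps.
   Kernels/cokernels in A^Z are computed pointwise, so a sequence in
   A^Z is exact iff it is exact at every index. *)
Definition famHom (A : AbCat) (X Y : int -> Obj A) := forall i, Hom A (X i) (Y i).
Definition shiftF (A : AbCat) (X : int -> Obj A) : int -> Obj A := fun i => X (i + 1).
Definition shiftM (A : AbCat) (X Y : int -> Obj A) (f : famHom X Y)
  : famHom (shiftF X) (shiftF Y) := fun i => f (i + 1).

Record ExactSumFunctor (A B : AbCat) := {
  SO : (int -> Obj A) -> Obj B;
  SM : forall X Y : int -> Obj A, famHom X Y -> Hom B (SO X) (SO Y);
  SM_id : forall X, SM (fun i => idm (X i)) = idm (SO X);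
  SM_comp : forall X Y Z (g : famHom Y Z) (f : famHom X Y),
      SM (fun i => comp (g i) (f i)) = comp (SM g) (SM f);
  SM_add : forall X Y (f g : famHom X Y), SM (fun i => f i + g i) = SM f + SM g;
  SM_exact : forall X Y Z (f : famHom X Y) (g : famHom Y Z),
      (forall i, exactAt (f i) (g i)) -> exactAt (SM f) (SM g);
  theta : forall X, Hom B (SO X) (SO (shiftF X));
  thetaInv : forall X, Hom B (SO (shiftF X)) (SO X);
  theta_inv_l : forall X, comp (thetaInv X) (theta X) = idm (SO X);
  theta_inv_r : forall X, comp (theta X) (thetaInv X) = idm (SO (shiftF X));
  theta_nat : forall X Y (f : famHom X Y),
      comp (SM (shiftM f)) (theta X) = comp (theta Y) (SM f)
}.
Arguments SO {A B}.
Arguments SM {A B} _ {X Y}.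
Arguments theta {A B} _ X.
Arguments thetaInv {A B} _ X.

(* Double complexes: A i r, i = row (downwards), r = column (rightwards) *)
Record DoubleComplex (A : AbCat) := {
  DC : int -> int -> Obj A;
  d1 : forall i r, Hom A (DC i r) (DC (i + 1) r);
  d2 : forall i r, Hom A (DC i r) (DC i (r + 1));
  d1d1 : forall i r, comp (d1 (i + 1) r) (d1 i r) = 0;
  d2d2 : forall i r, comp (d2 i (r + 1)) (d2 i r) = 0;
  d1d2 : forall i r, comp (d1 i (r + 1)) (d2 i r) = comp (d2 (i + 1) r) (d1 i r)
}.
Arguments DC {A}.
Arguments d1 {A}.
Arguments d2 {A}.

Section DoubleComplexDefs.
Variables (A : AbCat) (D : DoubleComplex A).

Definition rowsExact : Prop :=
  forall i r, exactAt (d2 D i r) (d2 D i (r + 1)).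
Definition colsExact : Prop :=
  forall i r, exactAt (d1 D i r) (d1 D (i + 1) r).

Lemma sub1K (r : int) : r - 1 + 1 = r.
Proof. by rewrite subrK. Qed.

Definition dIn (i r : int) : Hom A (DC D i (r - 1)) (DC D i r) :=
  comp (castF (DC D i) (sub1K r)) (d2 D i (r - 1)).
Definition cIn (i r : int) : Hom A (DC D (i - 1) r) (DC D i r) :=
  comp (castF (fun k => DC D k r) (sub1K i)) (d1 D (i - 1) r).
(* e = d2 D i r, f = d1 D i r *)
Definition pIn (i r : int) : Hom A (DC D (i - 1) (r - 1)) (DC D i r) :=
  comp (cIn i r) (dIn (i - 1) r).
Definition qOut (i r : int) : Hom A (DC D i r) (DC D (i + 1) (r + 1)) :=
  comp (d2 D (i + 1) r) (d1 D i r).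

(* receptor  (ker e /\ ker f) / im p  =  coker (p lifted into ker (e,f)) *)
Definition receptor (i r : int) : Obj A :=
  cokO (kerLift (pairM (d2 D i r) (d1 D i r)) (pIn i r)).
(* donor  ker q / (im c + im d)  =  coker ([c d] lifted into ker q) *)
Definition donor (i r : int) : Obj A :=
  cokO (kerLift (qOut i r) (copairM (cIn i r) (dIn i r))).

Definition weaklyBounded : Prop :=
  forall r s : int,
    (exists n : int, 0 < n /\
       (isZeroObj (receptor (r - n) (s + n)) \/ isZeroObj (donor (r - n - 1) (s + n))))
 /\ (exists n : int, n < 0 /\
       (isZeroObj (receptor (r - n) (s + n)) \/ isZeroObj (donor (r - n - 1) (s + n)))).

Variables (B : AbCat) (S : ExactSumFunctor A B).

Definition totFam (n : int) : int -> Obj A := fun i => DC D i (n - i).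
Definition totO (n : int) : Obj B := SO S (totFam n).

Lemma tot_idx2 (n i : int) : n - i + 1 = n + 1 - i.
Proof. by rewrite addrAC. Qed.
Lemma tot_idx1 (n i : int) : n - i = n + 1 - (i + 1).
Proof. by rewrite opprD addrACA subrr addr0. Qed.

Definition totD2 (n : int) : Hom B (totO n) (totO (n + 1)) :=
  SM S (X := totFam n) (Y := totFam (n + 1))
     (fun i => comp (castF (DC D i) (tot_idx2 n i)) (d2 D i (n - i))).
(* vertical part: A_{i,n-i} -> A_{i+1,n+1-(i+1)}, a map into the shifted
   family, followed by the inverse shift isomorphism *)
Definition totD1 (n : int) : Hom B (totO n) (totO (n + 1)) :=
  comp (thetaInv S (totFam (n + 1)))
    (SM S (X := totFam n) (Y := shiftF (totFam (n + 1)))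
       (fun i => comp (castF (DC D (i + 1)) (tot_idx1 n i)) (d1 D i (n - i)))).
Definition totD (n : int) : Hom B (totO n) (totO (n + 1)) :=
  totD2 n + (if odd (absz n) then - totD1 n else totD1 n).

(* H^tot(A_n) = ker delta_n / im delta_{n-1}
              = coker (delta_{n-1} lifted into ker delta_n) *)
Definition Htot (n : int) : Obj B :=
  cokO (kerLift (totD n) (comp (castF totO (sub1K n)) (totD (n - 1)))).

End DoubleComplexDefs.

(* Since rows and columns are exact, a diagram chase shows that the donor at
   (i+1, c+1) vanishes iff the receptor at (i+2, c+1) does, iff the receptor
   at (i+1, c+2) does.  Vanishing of receptors is therefore constant along
   antidiagonals, and weak boundedness supplies a vanishing receptor or donor
   on each of them.  Since Sigma is exact, row exactness and the vanishing of
   all receptors and donors pass to the commuting pair (delta_2, delta_1) of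
   differentials on the objects A_n, and a chase in that bicomplex shows that
   delta_2 +- delta_1 is exact. *)

From mathcomp Require Import all_boot all_order all_algebra zify.
From Stdlib Require Import FunctionalExtensionality.
Set Implicit Arguments. Unset Strict Implicit. Unset Printing Implicit Defensive.
Import GRing.Theory.
Local Open Scope ring_scope.

Section AbelianCategory.
Variable C : AbCat.
Implicit Types a b c t : Obj C.

Lemma comp0m a b c (f : Hom C a b) : comp (0 : Hom C b c) f = 0.
Proof. by apply: (addrI (comp (0 : Hom C b c) f)); rewrite -compDl !addr0. Qed.
Lemma compm0 a b c (g : Hom C b c) : comp g (0 : Hom C a b) = 0.
Proof. by apply: (addrI (comp g (0 : Hom C a b))); rewrite -compDr !addr0. Qed.
Lemma compNm a b c (g : Hom C b c) (f : Hom C a b) : comp (- g) f = - comp g f.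
Proof. by apply: (addrI (comp g f)); rewrite -compDl !subrr comp0m. Qed.
Lemma compmN a b c (g : Hom C b c) (f : Hom C a b) : comp g (- f) = - comp g f.
Proof. by apply: (addrI (comp g f)); rewrite -compDr !subrr compm0. Qed.
Lemma compBl a b c (g g' : Hom C b c) (f : Hom C a b) :
  comp (g - g') f = comp g f - comp g' f.
Proof. by rewrite compDl compNm. Qed.
Lemma compBr a b c (g : Hom C b c) (f f' : Hom C a b) :
  comp g (f - f') = comp g f - comp g f'.
Proof. by rewrite compDr compmN. Qed.

Definition epi a b (e : Hom C a b) :=
  forall t (x y : Hom C b t), comp x e = comp y e -> x = y.
Definition mono a b (m : Hom C a b) :=
  forall t (x y : Hom C t a), comp m x = comp m y -> x = y.

Lemma epi_cancel0 a b (e : Hom C a b) t (x : Hom C b t) : epi e -> comp x e = 0 -> x = 0.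
Proof. by move=> He E; apply: He; rewrite E comp0m. Qed.
Lemma mono_cancel0 a b (m : Hom C a b) t (x : Hom C t a) : mono m -> comp m x = 0 -> x = 0.
Proof. by move=> Hm E; apply: Hm; rewrite E compm0. Qed.
Lemma cancel0_epi a b (e : Hom C a b) :
  (forall t (x : Hom C b t), comp x e = 0 -> x = 0) -> epi e.
Proof.
move=> H t x y E; apply/eqP; rewrite -subr_eq0; apply/eqP/H.
by rewrite compBl E subrr.
Qed.

Lemma epi_comp a b c (f : Hom C b c) (g : Hom C a b) : epi f -> epi g -> epi (comp f g).
Proof. by move=> Hf Hg t x y; rewrite !compA => /Hg /Hf. Qed.
Lemma mono_comp a b c (f : Hom C b c) (g : Hom C a b) : mono f -> mono g -> mono (comp f g).
Proof. by move=> Hf Hg t x y; rewrite -!compA => /Hf /Hg. Qed.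
Lemma mono_kerM a b (f : Hom C a b) : mono (kerM f).
Proof. by move=> t x y; apply: kerM_mono. Qed.
Lemma epi_cokM a b (f : Hom C a b) : epi (cokM f).
Proof. by move=> t x y; apply: cokM_epi. Qed.

Lemma castF_refl (F : int -> Obj C) m (e : m = m) : castF F e = idm (F m).
Proof. by rewrite (eq_irrelevance e erefl). Qed.
Lemma castF_irr (F : int -> Obj C) m n (e e' : m = n) : castF F e = castF F e'.
Proof. by rewrite (eq_irrelevance e e'). Qed.
Lemma mono_castF (F : int -> Obj C) m n (e : m = n) : mono (castF F e).
Proof. by case: n / e => t x y; rewrite !comp1m. Qed.

Definition im a b (f : Hom C a b) := kerM (cokM f).
Definition coim a b (f : Hom C a b) := kerLift (cokM f) f.

Lemma im_coim a b (f : Hom C a b) : comp (im f) (coim f) = f.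
Proof. by rewrite kerLift_spec // cokM_comp. Qed.

(* If [u] kills [coim f], then [f] factors through the mono
   [comp (im f) (kerM u)], whose cokernel hence kills [im f]; so [kerM u] is
   split epi and [u = 0]. *)
Lemma epi_coim a b (f : Hom C a b) : epi (coim f).
Proof.
apply: cancel0_epi => w u Hu.
set m := im f; set k := kerM u.
have mono_mk : mono (comp m k) by apply: mono_comp; apply: mono_kerM.
have f_mk : f = comp (comp m k) (kerLift u (coim f)).
  by rewrite -compA kerLift_spec // im_coim.
have cok_f : comp (cokM (comp m k)) f = 0.
  by have := congr1 (comp (cokM (comp m k))) f_mk; rewrite compA cokM_comp comp0m.
have cok_m : comp (cokM (comp m k)) m = 0.
  by rewrite -(cokDesc_spec cok_f) -compA kerM_comp compm0.
have [y Hy] := mono_is_kernel mono_mk cok_m.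
have ky : comp k y = idm _.
  by apply: (kerM_mono (f := cokM f)); rewrite compA Hy compm1.
by rewrite -(compm1 u) -ky compA kerM_comp comp0m.
Qed.

(* Pseudo-elements: [x] lies in the image of [f] once it is pulled back
   along some epimorphism. *)
Definition in_image a b t (f : Hom C a b) (x : Hom C t b) :=
  exists t' (e : Hom C t' t) (y : Hom C t' a), epi e /\ comp f y = comp x e.

Lemma copairM_inl x y a (c : Hom C x a) (d : Hom C y a) : comp (copairM c d) bp_inl = c.
Proof.
by rewrite compDl -!compA bp_pl_inl bp_pr_inl compm0 compm1 addr0.
Qed.
Lemma copairM_comp x y a t (c : Hom C x a) (d : Hom C y a) (z : Hom C t (bpO x y)) :
  comp (copairM c d) z = comp c (comp bp_pl z) + comp d (comp bp_pr z).
Proof. by rewrite compDl -!compA. Qed.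
Lemma pairM_comp a b c t (e : Hom C a b) (f : Hom C a c) (x : Hom C t a) :
  comp (pairM e f) x = pairM (comp e x) (comp f x).
Proof. by rewrite /pairM compDl -!compA. Qed.
Lemma bp_pl_pairM a b c (e : Hom C a b) (f : Hom C a c) : comp bp_pl (pairM e f) = e.
Proof. by rewrite compDr !compA bp_pl_inl bp_pl_inr comp0m comp1m addr0. Qed.
Lemma bp_pr_pairM a b c (e : Hom C a b) (f : Hom C a c) : comp bp_pr (pairM e f) = f.
Proof. by rewrite compDr !compA bp_pr_inl bp_pr_inr comp0m comp1m add0r. Qed.
Lemma copairM_pairM x y a t (c : Hom C x a) (d : Hom C y a)
    (u : Hom C t x) (v : Hom C t y) :
  comp (copairM c d) (pairM u v) = comp c u + comp d v.
Proof. by rewrite copairM_comp bp_pl_pairM bp_pr_pairM. Qed.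
Lemma pairM_eq0 a b c t (e : Hom C a b) (f : Hom C a c) (x : Hom C t a) :
  comp (pairM e f) x = 0 <-> comp e x = 0 /\ comp f x = 0.
Proof.
rewrite pairM_comp; split=> [H|[-> ->]]; last by rewrite /pairM !compm0 addr0.
split; [have := congr1 (comp bp_pl) H | have := congr1 (comp bp_pr) H].
  by rewrite bp_pl_pairM compm0.
by rewrite bp_pr_pairM compm0.
Qed.

(* Pull [x] back along the pullback of the epimorphism [coim f] and the
   factorisation [x'] of [x] through [im f], built as a kernel. *)
Lemma cokM_in_image a b t (f : Hom C a b) (x : Hom C t b) :
  comp (cokM f) x = 0 -> in_image f x.
Proof.
move=> Hx; set x' := kerLift (cokM f) x.
have im_x' : comp (im f) x' = x by rewrite kerLift_spec.
set phi := copairM (coim f) (- x'); set k := kerM phi.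
have epi_phi : epi phi.
  apply: cancel0_epi => w' z Hz; apply: (epi_cancel0 (@epi_coim _ _ f)).
  by rewrite -(copairM_inl (coim f) (- x')) compA Hz comp0m.
exists (kerO phi), (comp bp_pr k), (comp bp_pl k); split.
  apply: cancel0_epi => w u Hu.
  have [z Hz] : exists z, comp z phi = comp u bp_pr.
    by apply: epi_is_cokernel epi_phi _ _ _; rewrite -compA.
  have z0 : z = 0.
    apply: (epi_cancel0 (@epi_coim _ _ f)).
    by rewrite -(copairM_inl (coim f) (- x')) compA Hz -compA bp_pr_inl compm0.
  by rewrite -(compm1 u) -(bp_pr_inr a t) compA -Hz z0 !comp0m.
have coim_x' : comp (coim f) (comp bp_pl k) = comp x' (comp bp_pr k).
  apply/eqP; rewrite -subr_eq0 -compNm -copairM_comp.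
  exact/eqP/kerM_comp.
have := congr1 (comp^~ (comp bp_pl k)) (im_coim f).
by rewrite /= -compA coim_x' compA im_x' => <-.
Qed.

Lemma exactP a b c (f : Hom C a b) (g : Hom C b c) :
  exactAt f g <-> comp g f = 0 /\ (forall t (x : Hom C t b), comp g x = 0 -> in_image f x).
Proof.
split=> [[gf0 H] | [gf0 H]]; split=> //.
  by move=> t x gx; apply: cokM_in_image; rewrite -(kerLift_spec gx) compA H comp0m.
have [t' [e [y [He Hy]]]] := H _ (kerM g) (kerM_comp g).
by apply: (epi_cancel0 He); rewrite -compA -Hy compA cokM_comp comp0m.
Qed.

Lemma exact_in_image a b c t (f : Hom C a b) (g : Hom C b c) (x : Hom C t b) :
  exactAt f g -> comp g x = 0 -> in_image f x.
Proof. by case/exactP=> _; apply. Qed.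

Lemma exact_pairMP a b c d (p : Hom C d a) (e : Hom C a b) (f : Hom C a c) :
  exactAt p (pairM e f) <-> [/\ comp e p = 0, comp f p = 0 &
     forall t (x : Hom C t a), comp e x = 0 -> comp f x = 0 -> in_image p x].
Proof.
rewrite exactP pairM_eq0; split=> [[[ep fp] H]|[ep fp H]]; split=> // t x.
  by move=> ex fx; apply: H; apply/pairM_eq0.
by case/pairM_eq0; apply: H.
Qed.

Lemma isZero_cokO a b (h : Hom C a b) : cokM h = 0 -> isZeroObj (cokO h).
Proof.
move=> h0; have id0 : idm (cokO h) = 0.
  by apply: (epi_cancel0 (@epi_cokM _ _ h)); rewrite comp1m.
split=> Y f; first by apply: (epi_cancel0 (@epi_cokM _ _ h)); rewrite h0 compm0.
by rewrite -(comp1m f) id0 comp0m.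
Qed.

(* [cokO (kerLift g f)] is the homology ker g / im f. *)
Lemma exact_homology0 a b c (f : Hom C a b) (g : Hom C b c) :
  exactAt f g -> isZeroObj (cokO (kerLift g f)).
Proof.
case/exactP=> gf0 H; apply: isZero_cokO.
have [t' [e [y [He Hy]]]] := H _ (kerM g) (kerM_comp g).
have fy : comp (kerLift g f) y = e.
  by apply: (kerM_mono (f := g)); rewrite compA kerLift_spec // Hy compm1.
by apply: (epi_cancel0 He); rewrite -fy compA cokM_comp comp0m.
Qed.

Lemma homology0_exact a b c (f : Hom C a b) (g : Hom C b c) (gf0 : comp g f = 0) :
  isZeroObj (cokO (kerLift g f)) -> exactAt f g.
Proof.
case=> _ Z; apply/exactP; split=> // t x gx.
have /cokM_in_image [t' [e [y [He Hy]]]] : comp (cokM (kerLift g f)) (kerLift g x) = 0.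
  by rewrite (Z _ (cokM _)) comp0m.
exists t', e, y; split=> //.
by have := congr1 (comp (kerM g)) Hy; rewrite !compA !kerLift_spec.
Qed.

End AbelianCategory.

Section ReceptorDonor.
Variables (A : AbCat) (D : DoubleComplex A).

(* Receptor and donor at (i+1, c+1), vanishing in the sense of pseudo-elements;
   indexing from (i, c) avoids transports along i + 1 - 1 = i. *)
Definition receptor_trivial (i c : int) :=
  forall t (x : Hom A t (DC D (i + 1) (c + 1))),
    comp (d2 D (i + 1) (c + 1)) x = 0 -> comp (d1 D (i + 1) (c + 1)) x = 0 ->
    in_image (comp (d1 D i (c + 1)) (d2 D i c)) x.
Definition donor_trivial (i c : int) :=
  forall t (x : Hom A t (DC D (i + 1) (c + 1))),
    comp (comp (d2 D (i + 1 + 1) (c + 1)) (d1 D (i + 1) (c + 1))) x = 0 ->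
    in_image (copairM (d1 D i (c + 1)) (d2 D (i + 1) c)) x.

Lemma receptor0_trivial i c :
  isZeroObj (receptor D (i + 1) (c + 1)) -> receptor_trivial i c.
Proof.
rewrite /receptor /pIn /cIn /dIn.
move: (sub1K (i + 1)) (sub1K (c + 1)); set i' := i + 1 - 1; set c' := c + 1 - 1.
clearbody i' c' => ei ec; have ? : i' = i by apply: (addIr 1).
have ? : c' = c by apply: (addIr 1).
subst i' c'; rewrite !castF_refl !comp1m => Z.
have p0 : comp (pairM (d2 D (i + 1) (c + 1)) (d1 D (i + 1) (c + 1)))
               (comp (d1 D i (c + 1)) (d2 D i c)) = 0.
  apply/pairM_eq0; split; first by rewrite compA -d1d2 -compA d2d2 compm0.
  by rewrite compA d1d1 comp0m.
by case/exact_pairMP: (homology0_exact p0 Z).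
Qed.

Lemma donor0_trivial i c : isZeroObj (donor D (i + 1) (c + 1)) -> donor_trivial i c.
Proof.
rewrite /donor /cIn /dIn.
move: (sub1K (i + 1)) (sub1K (c + 1)); set i' := i + 1 - 1; set c' := c + 1 - 1.
clearbody i' c' => ei ec; have ? : i' = i by apply: (addIr 1).
have ? : c' = c by apply: (addIr 1).
subst i' c'; rewrite !castF_refl !comp1m => Z.
have q0 : comp (comp (d2 D (i + 1 + 1) (c + 1)) (d1 D (i + 1) (c + 1)))
               (copairM (d1 D i (c + 1)) (d2 D (i + 1) c)) = 0.
  rewrite compDr !compA -(compA (d2 _ _ _)) d1d1 compm0 comp0m add0r.
  by rewrite -(compA (d2 _ _ _)) d1d2 compA d2d2 !comp0m.
by case/exactP: (homology0_exact q0 Z).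
Qed.

Hypotheses (rowsE : rowsExact D) (colsE : colsExact D).

Lemma donor_receptor_below i c : donor_trivial i c <-> receptor_trivial (i + 1) c.
Proof.
split=> [don t x x2 x1 | rec t a qa].
- have [t1 [e1 [a [e1_epi ax]]]] := exact_in_image (colsE (i + 1) (c + 1)) x1.
  have : comp (comp (d2 D (i + 1 + 1) (c + 1)) (d1 D (i + 1) (c + 1))) a = 0.
    by rewrite -compA ax compA x2 comp0m.
  case/don=> t2 [e2 [y [e2_epi ay]]].
  exists t2, (comp e1 e2), (comp bp_pr y); split; first exact: epi_comp.
  rewrite [RHS]compA -ax -[RHS]compA -ay copairM_comp compDr.
  by rewrite [in X in _ = X + _]compA d1d1 comp0m add0r !compA.
- have x2 : comp (d2 D (i + 1 + 1) (c + 1)) (comp (d1 D (i + 1) (c + 1)) a) = 0.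
    by rewrite compA.
  have x1 : comp (d1 D (i + 1 + 1) (c + 1)) (comp (d1 D (i + 1) (c + 1)) a) = 0.
    by rewrite compA d1d1 comp0m.
  have [t1 [e1 [y [e1_epi ya]]]] := rec _ _ x2 x1.
  have z1 : comp (d1 D (i + 1) (c + 1)) (comp a e1 - comp (d2 D (i + 1) c) y) = 0.
    by rewrite compBr !compA ya subrr.
  have [t2 [e2 [z [e2_epi zy]]]] := exact_in_image (colsE i (c + 1)) z1.
  exists t2, (comp e1 e2), (pairM z (comp y e2)); split; first exact: epi_comp.
  by rewrite copairM_pairM zy compBl !compA subrK.
Qed.

Lemma donor_receptor_right i c : donor_trivial i c <-> receptor_trivial i (c + 1).
Proof.
split=> [don t x x2 x1 | rec t a qa].
- have [t1 [e1 [a [e1_epi ax]]]] := exact_in_image (rowsE (i + 1) (c + 1)) x2.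
  have : comp (comp (d2 D (i + 1 + 1) (c + 1)) (d1 D (i + 1) (c + 1))) a = 0.
    by rewrite -d1d2 -compA ax compA x1 comp0m.
  case/don=> t2 [e2 [y [e2_epi ay]]].
  exists t2, (comp e1 e2), (comp bp_pl y); split; first exact: epi_comp.
  rewrite [RHS]compA -ax -[RHS]compA -ay copairM_comp compDr.
  by rewrite [in X in _ = _ + X]compA d2d2 comp0m addr0 !compA d1d2.
- have x2 : comp (d2 D (i + 1) (c + 1 + 1)) (comp (d2 D (i + 1) (c + 1)) a) = 0.
    by rewrite compA d2d2 comp0m.
  have x1 : comp (d1 D (i + 1) (c + 1 + 1)) (comp (d2 D (i + 1) (c + 1)) a) = 0.
    by rewrite compA d1d2.
  have [t1 [e1 [y [e1_epi ya]]]] := rec _ _ x2 x1.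
  have z2 : comp (d2 D (i + 1) (c + 1)) (comp a e1 - comp (d1 D i (c + 1)) y) = 0.
    by rewrite compBr !compA -ya d1d2 subrr.
  have [t2 [e2 [z [e2_epi zy]]]] := exact_in_image (rowsE (i + 1) c) z2.
  exists t2, (comp e1 e2), (pairM (comp y e2) z); split; first exact: epi_comp.
  by rewrite copairM_pairM zy compBl !compA [LHS]addrCA subrr addr0.
Qed.

End ReceptorDonor.

Section Propagation.
Variables (A : AbCat) (D : DoubleComplex A).
Hypotheses (rowsE : rowsExact D) (colsE : colsExact D).

Lemma receptor_trivial_antidiag a i j :
  receptor_trivial D i (a - i) <-> receptor_trivial D j (a - j).
Proof.
pose R k := receptor_trivial D k (a - k).
have step k : R (k + 1) <-> R k.
  rewrite /R -(donor_receptor_below colsE) (donor_receptor_right rowsE).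
  by have -> : a - (k + 1) + 1 = a - k by lia.
have shift (n : nat) k : R (k + n%:Z) <-> R k.
  elim: n => [|n IHn]; first by rewrite addr0.
  by rewrite (_ : k + n.+1%:Z = k + n%:Z + 1) ?step //; lia.
have to0 k : R k <-> R 0.
  case: k => n; first by rewrite -[Posz n]add0r; apply: shift.
  by rewrite -(shift n.+1 (Negz n)) (_ : Negz n + n.+1%:Z = 0) //; lia.
by rewrite -/(R i) -/(R j) to0 -(to0 j).
Qed.

Hypothesis wb : weaklyBounded D.

Lemma receptor_trivial_all i c : receptor_trivial D i c.
Proof.
have [[n [_ Zn]] _] := wb (i + 1) (c + 1).
rewrite (_ : c = (i + c) - i); last by lia.
apply/(receptor_trivial_antidiag (i + c) (i - n)).
rewrite (_ : (i + c) - (i - n) = c + n); last by lia.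
rewrite (_ : c + 1 + n = c + n + 1) in Zn; last by lia.
case: Zn => Z.
- by apply: receptor0_trivial; rewrite (_ : i - n + 1 = i + 1 - n) //; lia.
- rewrite (_ : i + 1 - n - 1 = i - n - 1 + 1) in Z; last by lia.
  have := (donor_receptor_below colsE _ _).1 (donor0_trivial Z).
  by rewrite (_ : i - n - 1 + 1 = i - n) //; lia.
Qed.

Lemma donor_trivial_all i c : donor_trivial D i c.
Proof. exact/(donor_receptor_below colsE)/receptor_trivial_all. Qed.

End Propagation.

Section BicomplexSegment.
Variables (C : AbCat) (R0 R1 R2 R3 R4 : Obj C).
Variables (H0 V0 : Hom C R0 R1) (H1 V1 : Hom C R1 R2).
Variables (H2 V2 : Hom C R2 R3) (H3 V3 : Hom C R3 R4).
Hypotheses (H2H1 : comp H2 H1 = 0) (H3H2 : comp H3 H2 = 0).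
Hypotheses (V1V0 : comp V1 V0 = 0) (V2V1 : comp V2 V1 = 0).
Hypotheses (H1V0 : comp H1 V0 = comp V1 H0) (H2V1 : comp H2 V1 = comp V2 H1).
Hypothesis (H3V2 : comp H3 V2 = comp V3 H2).
Hypothesis H_exact : forall t (x : Hom C t R2), comp H2 x = 0 -> in_image H1 x.
Hypothesis receptor_R3 : forall t (u : Hom C t R3),
  comp H3 u = 0 -> comp V3 u = 0 -> in_image (comp H2 V1) u.
Hypothesis donor_R1 : forall t (z : Hom C t R1), comp (comp H2 V1) z = 0 ->
  exists t' (e : Hom C t' t) (a b : Hom C t' R0),
    epi e /\ comp z e = comp H0 a + comp V0 b.

(* For a cycle x, H2 x = H2 V1 z by the receptor, x = V1 z + H1 w by row
   exactness, H2 V1 (z + w) = 0, so z + w = H0 a + V0 b by the donor, and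
   then x = (H1 - V1) (V0 a + w). *)
Lemma segment_total_exact t (x : Hom C t R2) :
  comp (H2 + V2) x = 0 -> in_image (H1 - V1) x.
Proof.
move=> x0; have V2x : comp V2 x = - comp H2 x.
  by apply/eqP; rewrite -addr_eq0 addrC -compDl x0.
have H3H2x : comp H3 (comp H2 x) = 0 by rewrite compA H3H2 comp0m.
have V3H2x : comp V3 (comp H2 x) = 0.
  by rewrite compA -H3V2 -compA V2x compmN H3H2x oppr0.
have [t1 [e1 [z [e1_epi H2V1z]]]] := receptor_R3 H3H2x V3H2x.
have : comp H2 (comp x e1 - comp V1 z) = 0 by rewrite compBr !compA H2V1z subrr.
case/H_exact=> t2 [e2 [w [e2_epi H1w]]].
have x_e : comp (comp x e1) e2 = comp V1 (comp z e2) + comp H1 w.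
  by rewrite H1w compBl !compA addrC subrK.
have : comp (comp H2 V1) (comp z e2 + w) = 0.
  have : comp (H2 + V2) (comp (comp x e1) e2) = 0 by rewrite !compA x0 !comp0m.
  rewrite x_e compDl !compDr !compA H2H1 comp0m addr0 V2V1 !comp0m add0r.
  by rewrite -H2V1.
case/donor_R1=> t3 [e3 [a [b [e3_epi zw]]]].
exists t3, (comp e1 (comp e2 e3)), (comp V0 a + comp w e3).
split; first by apply: epi_comp => //; apply: epi_comp.
have z_e : comp z (comp e2 e3) = comp H0 a + comp V0 b - comp w e3.
  by rewrite compA -zw compDl addrK.
rewrite (compA x) (compA (comp x e1)) x_e [RHS]compDl -(compA V1) -(compA z) z_e.
rewrite compBl !compDr !compmN !compA H1V0 V1V0 !comp0m add0r addr0.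
by rewrite addrAC.
Qed.

End BicomplexSegment.

Lemma segment_total_comp0 (C : AbCat) (R0 R1 R2 : Obj C)
    (H1 V1 : Hom C R0 R1) (H2 V2 : Hom C R1 R2) :
  comp H2 H1 = 0 -> comp V2 V1 = 0 -> comp H2 V1 = comp V2 H1 ->
  comp (H2 + V2) (H1 - V1) = 0.
Proof. by move=> HH VV HV; rewrite compDl !compBr HH VV HV sub0r subr0 addNr. Qed.

Section SumFunctor.
Variables (A B : AbCat) (S : ExactSumFunctor A B).

Lemma SM_ext X Y (f g : famHom X Y) : (forall i, f i = g i) -> SM S f = SM S g.
Proof. by move=> fg; rewrite (functional_extensionality_dep _ _ fg). Qed.

Lemma SM0 X Y : SM S (fun i => (0 : Hom A (X i) (Y i))) = 0.
Proof.
apply: (addrI (SM S (fun i => (0 : Hom A (X i) (Y i))))).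
by rewrite -SM_add addr0; apply: SM_ext => i; rewrite addr0.
Qed.

Lemma SM_pairM X Y Z (f : famHom X Y) (g : famHom X Z) :
  SM S (fun i => pairM (f i) (g i)) =
  comp (SM S (fun i => @bp_inl A (Y i) (Z i))) (SM S f)
  + comp (SM S (fun i => @bp_inr A (Y i) (Z i))) (SM S g).
Proof. by rewrite -!SM_comp -SM_add; apply: SM_ext. Qed.

Lemma SM_copairM X Y Z (f : famHom X Z) (g : famHom Y Z) :
  SM S (fun i => copairM (f i) (g i)) =
  comp (SM S f) (SM S (fun i => @bp_pl A (X i) (Y i)))
  + comp (SM S g) (SM S (fun i => @bp_pr A (X i) (Y i))).
Proof. by rewrite -!SM_comp -SM_add; apply: SM_ext. Qed.

Lemma thetaInv_nat X Y (f : famHom X Y) :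
  comp (SM S f) (thetaInv S X) = comp (thetaInv S Y) (SM S (shiftM f)).
Proof.
rewrite -[LHS]comp1m -(theta_inv_l S Y) -!compA; congr (comp _ _).
by rewrite !compA -theta_nat -[RHS]compm1 -(theta_inv_r S X) !compA.
Qed.

Lemma mono_thetaInv X : mono (thetaInv S X).
Proof.
move=> t x y xy.
by rewrite -(comp1m x) -(comp1m y) -(theta_inv_r S X) -!compA xy.
Qed.

End SumFunctor.

Section TransportedDifferentials.
Variables (A : AbCat) (D : DoubleComplex A).

Lemma d2d2_castF a b b' (e : b + 1 = b') b'' (e' : b' + 1 = b'') :
  comp (comp (castF (DC D a) e') (d2 D a b')) (comp (castF (DC D a) e) (d2 D a b)) = 0.
Proof. by case: b' / e e' => e'; rewrite castF_refl comp1m -compA d2d2 compm0. Qed.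

Lemma d1d1_castF a b b' (e : b = b') b'' (e' : b' = b'') :
  comp (comp (castF (DC D (a + 1 + 1)) e') (d1 D (a + 1) b'))
       (comp (castF (DC D (a + 1)) e) (d1 D a b)) = 0.
Proof. by case: b' / e e' => e'; rewrite castF_refl comp1m -compA d1d1 compm0. Qed.

Lemma d1d2_castF a b b1 (e : b = b1) b2 (e1 : b1 + 1 = b2) b3 (e2 : b + 1 = b3)
    (e3 : b3 = b2) :
  comp (comp (castF (DC D (a + 1)) e1) (d2 D (a + 1) b1))
       (comp (castF (DC D (a + 1)) e) (d1 D a b)) =
  comp (comp (castF (DC D (a + 1)) e3) (d1 D a b3)) (comp (castF (DC D a) e2) (d2 D a b)).
Proof.
case: b1 / e e1 => e1; case: b3 / e2 e3 => e3.
rewrite !castF_refl !comp1m -!compA -d1d2; congr (comp _ _).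
exact: castF_irr.
Qed.

Lemma row_exact_castF (rowsE : rowsExact D) a b b' (e : b + 1 = b') b''
    (e' : b' + 1 = b'') :
  exactAt (comp (castF (DC D a) e) (d2 D a b)) (comp (castF (DC D a) e') (d2 D a b')).
Proof.
case: b' / e e' => e'; rewrite castF_refl comp1m.
apply/exactP; split; first by rewrite -compA d2d2 compm0.
move=> t x; rewrite -compA => /(mono_cancel0 (mono_castF (e := e'))).
exact: exact_in_image.
Qed.

Lemma receptor_exact_castF a c b (e : c + 1 = b) b' (e' : b + 1 = b') b'' (e'' : b = b'') :
  receptor_trivial D a c ->
  exactAt (comp (comp (castF (DC D (a + 1)) e) (d1 D a (c + 1)))
                (comp (castF (DC D a) (erefl (c + 1))) (d2 D a c)))
    (pairM (comp (castF (DC D (a + 1)) e') (d2 D (a + 1) b))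
           (comp (castF (DC D (a + 1 + 1)) e'') (d1 D (a + 1) b))).
Proof.
case: b / e e' e'' => e' e''; case: b' / e'; case: b'' / e''.
rewrite /= !comp1m => rec; apply/exact_pairMP; split=> //.
  by rewrite !compA -d1d2 -compA d2d2 compm0.
by rewrite compA d1d1 comp0m.
Qed.

Lemma donor_exact_castF a c b c1 (e : c1 = b) (e1 : c + 1 = b) b' (e' : b = b') b''
    (e'' : b' + 1 = b'') :
  donor_trivial D a c ->
  exactAt (copairM (comp (castF (DC D (a + 1)) e) (d1 D a c1))
                   (comp (castF (DC D (a + 1)) e1) (d2 D (a + 1) c)))
    (comp (comp (castF (DC D (a + 1 + 1)) e'') (d2 D (a + 1 + 1) b'))
          (comp (castF (DC D (a + 1 + 1)) e') (d1 D (a + 1) b))).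
Proof.
case: b / e e1 e' => e1 e'; case: c1 / e1 e' => e'; case: b' / e' e'' => e''.
case: b'' / e''; rewrite /= !comp1m => don; apply/exactP; split=> //.
rewrite compDr !compA -(compA (d2 _ _ _)) d1d1 compm0 comp0m add0r.
by rewrite -(compA (d2 _ _ _)) d1d2 compA d2d2 !comp0m.
Qed.

End TransportedDifferentials.

Section TotalComplex.
Variables (A B : AbCat) (S : ExactSumFunctor A B) (D : DoubleComplex A).
Hypotheses (rowsE : rowsExact D) (colsE : colsExact D) (wb : weaklyBounded D).

Definition horF m : famHom (totFam D m) (totFam D (m + 1)) :=
  fun i => comp (castF (DC D i) (tot_idx2 m i)) (d2 D i (m - i)).
Definition verF m : famHom (totFam D m) (shiftF (totFam D (m + 1))) :=
  fun i => comp (castF (DC D (i + 1)) (tot_idx1 m i)) (d1 D i (m - i)).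

Lemma totD2E m : totD2 D S m = SM S (horF m).
Proof. by []. Qed.
Lemma totD1E m : totD1 D S m = comp (thetaInv S (totFam D (m + 1))) (SM S (verF m)).
Proof. by []. Qed.

Lemma totD2D2 m : comp (totD2 D S (m + 1)) (totD2 D S m) = 0.
Proof. by rewrite !totD2E -SM_comp -(SM0 S); apply: SM_ext => i; apply: d2d2_castF. Qed.

Lemma totD1D1 m : comp (totD1 D S (m + 1)) (totD1 D S m) = 0.
Proof.
rewrite !totD1E -compA (compA (SM S (verF (m + 1)))) thetaInv_nat -compA -SM_comp.
rewrite (_ : SM S _ = 0) ?compm0 // -(SM0 S); apply: SM_ext => i.
exact: d1d1_castF.
Qed.

Lemma totD2D1 m :
  comp (totD2 D S (m + 1)) (totD1 D S m) = comp (totD1 D S (m + 1)) (totD2 D S m).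
Proof.
rewrite totD2E !totD1E totD2E compA thetaInv_nat -!compA -!SM_comp.
by congr (comp _ _); apply: SM_ext => i; apply: d1d2_castF.
Qed.

Lemma totD2_exact m t (x : Hom B t (totO D S (m + 1))) :
  comp (totD2 D S (m + 1)) x = 0 -> in_image (totD2 D S m) x.
Proof. by apply: exact_in_image; apply: SM_exact => i; apply: row_exact_castF. Qed.

Lemma tot_idx_diag (m i : int) : m - i + 1 = m + 1 + 1 - (i + 1).
Proof. lia. Qed.

Definition diagF m : famHom (totFam D m) (shiftF (totFam D (m + 1 + 1))) :=
  fun i => comp (comp (castF (DC D (i + 1)) (tot_idx_diag m i)) (d1 D i (m - i + 1)))
                (comp (castF (DC D i) (erefl (m - i + 1))) (d2 D i (m - i))).

Lemma totD2D1_diagF m : comp (totD2 D S (m + 1)) (totD1 D S m) =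
  comp (thetaInv S (totFam D (m + 1 + 1))) (SM S (diagF m)).
Proof.
rewrite totD2E totD1E compA thetaInv_nat -compA -SM_comp.
by congr (comp _ _); apply: SM_ext => i; apply: d1d2_castF.
Qed.

Definition codiagF m : famHom (totFam D (m + 1)) (shiftF (totFam D (m + 1 + 1 + 1))) :=
  fun i => comp (horF (m + 1 + 1) (i + 1)) (verF (m + 1) i).

Lemma totD2D1_codiagF m : comp (totD2 D S (m + 1 + 1)) (totD1 D S (m + 1)) =
  comp (thetaInv S (totFam D (m + 1 + 1 + 1))) (SM S (codiagF m)).
Proof. by rewrite totD2E totD1E compA thetaInv_nat -compA -SM_comp. Qed.

(* Through the shift isomorphism [theta] this becomes [S] applied to the
   componentwise receptor sequences, which are exact. *)
Lemma tot_receptor m t (u : Hom B t (totO D S (m + 1 + 1))) :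
  comp (totD2 D S (m + 1 + 1)) u = 0 -> comp (totD1 D S (m + 1 + 1)) u = 0 ->
  in_image (comp (totD2 D S (m + 1)) (totD1 D S m)) u.
Proof.
move=> u2 u1; set w := comp (theta S (totFam D (m + 1 + 1))) u.
have u1' : comp (SM S (verF (m + 1 + 1))) u = 0.
  by apply: (mono_cancel0 (@mono_thetaInv _ _ S _)); rewrite compA -totD1E.
have w2 : comp (SM S (shiftM (horF (m + 1 + 1)))) w = 0.
  by rewrite /w compA theta_nat -compA -totD2E u2 compm0.
have w1 : comp (SM S (shiftM (verF (m + 1 + 1)))) w = 0.
  by rewrite /w compA theta_nat -compA u1' compm0.
have diag_exact : exactAt (SM S (diagF m))
    (SM S (fun i => pairM (shiftM (horF (m + 1 + 1)) i) (shiftM (verF (m + 1 + 1)) i))).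
  apply: SM_exact => i; apply: receptor_exact_castF.
  exact: receptor_trivial_all.
have [|t' [e [y [e_epi ye]]]] := exact_in_image diag_exact (x := w).
  by rewrite SM_pairM compDl -!compA w2 w1 !compm0 addr0.
exists t', e, y; split=> //.
by rewrite totD2D1_diagF -compA ye /w !compA theta_inv_l comp1m.
Qed.

Lemma tot_donor m t (z : Hom B t (totO D S (m + 1))) :
  comp (comp (totD2 D S (m + 1 + 1)) (totD1 D S (m + 1))) z = 0 ->
  exists t' (e : Hom B t' t) (a b : Hom B t' (totO D S m)),
    epi e /\ comp z e = comp (totD2 D S m) a + comp (totD1 D S m) b.
Proof.
move=> z0; set w := comp (theta S (totFam D (m + 1))) z.
have z0' : comp (SM S (codiagF m)) z = 0.
  by apply: (mono_cancel0 (@mono_thetaInv _ _ S _)); rewrite compA -totD2D1_codiagF.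
have w0 : comp (SM S (shiftM (codiagF m))) w = 0.
  by rewrite /w compA theta_nat -compA z0' compm0.
have codiag_exact :
    exactAt (SM S (fun i => copairM (verF m i) (shiftM (horF m) i)))
            (SM S (shiftM (codiagF m))).
  apply: SM_exact => i; apply: donor_exact_castF.
  exact: donor_trivial_all.
have [t' [e [y [e_epi ye]]]] := exact_in_image codiag_exact w0.
pose pl := SM S (fun i => @bp_pl A (totFam D m i) (shiftF (totFam D m) i)).
pose pr := SM S (fun i => @bp_pr A (totFam D m i) (shiftF (totFam D m) i)).
exists t', e, (comp (thetaInv S (totFam D m)) (comp pr y)), (comp pl y); split=> //.
rewrite totD2E totD1E !compA thetaInv_nat -!compA -compDr.
rewrite (addrC (comp (SM S (shiftM (horF m))) _)) !compA -compDl -SM_copairM.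
by rewrite ye /w !compA theta_inv_l comp1m.
Qed.

End TotalComplex.

Lemma odd_absz_add1 (k : int) : odd (absz (k + 1)) = ~~ odd (absz k).
Proof.
case: k => n; first by rewrite (_ : Posz n + 1 = Posz n.+1) //; lia.
by rewrite (_ : Negz n + 1 = - Posz n) ?abszN /= ?negbK // NegzE; lia.
Qed.

Section SignedTotalComplex.
Variables (A B : AbCat) (S : ExactSumFunctor A B) (D : DoubleComplex A).
Hypotheses (rowsE : rowsExact D) (colsE : colsExact D) (wb : weaklyBounded D).
Variable s : bool.

Definition signD1 m := if s then - totD1 D S m else totD1 D S m.

Lemma signD1D1 m : comp (signD1 (m + 1)) (signD1 m) = 0.
Proof. by rewrite /signD1; case: s; rewrite ?compNm ?compmN ?opprK totD1D1. Qed.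

Lemma totD2_signD1 m :
  comp (totD2 D S (m + 1)) (signD1 m) = comp (signD1 (m + 1)) (totD2 D S m).
Proof. by rewrite /signD1; case: s; rewrite ?compNm ?compmN totD2D1. Qed.

Lemma signed_receptor m t (u : Hom B t (totO D S (m + 1 + 1))) :
  comp (totD2 D S (m + 1 + 1)) u = 0 -> comp (signD1 (m + 1 + 1)) u = 0 ->
  in_image (comp (totD2 D S (m + 1)) (signD1 m)) u.
Proof.
rewrite /signD1; case: s => u2 u1; last exact: tot_receptor.
have /(tot_receptor rowsE colsE wb u2) [t' [e [y [e_epi ye]]]] :
    comp (totD1 D S (m + 1 + 1)) u = 0.
  by apply/eqP; rewrite -oppr_eq0 -compNm u1.
by exists t', e, (- y); rewrite !compmN compNm opprK.
Qed.

Lemma signed_donor m t (z : Hom B t (totO D S (m + 1))) :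
  comp (comp (totD2 D S (m + 1 + 1)) (signD1 (m + 1))) z = 0 ->
  exists t' (e : Hom B t' t) (a b : Hom B t' (totO D S m)),
    epi e /\ comp z e = comp (totD2 D S m) a + comp (signD1 m) b.
Proof.
rewrite /signD1; case: s => z0; last exact: tot_donor.
have /(tot_donor rowsE colsE wb) [t' [e [a [b [e_epi ze]]]]] :
    comp (comp (totD2 D S (m + 1 + 1)) (totD1 D S (m + 1))) z = 0.
  by apply/eqP; rewrite -oppr_eq0 -compNm -compmN z0.
by exists t', e, a, (- b); rewrite compmN compNm opprK.
Qed.

Lemma signed_total_comp0 k :
  comp (totD2 D S (k + 1 + 1) + signD1 (k + 1 + 1))
       (totD2 D S (k + 1) - signD1 (k + 1)) = 0.
Proof.
by apply: segment_total_comp0; [apply: totD2D2 | apply: signD1D1 | apply: totD2_signD1].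
Qed.

Lemma signed_total_exact k :
  exactAt (totD2 D S (k + 1) - signD1 (k + 1)) (totD2 D S (k + 1 + 1) + signD1 (k + 1 + 1)).
Proof.
apply/exactP; split; first exact: signed_total_comp0.
move=> t; apply: segment_total_exact.
- exact: totD2D2.
- exact: totD2D2.
- exact: signD1D1.
- exact: signD1D1.
- exact: totD2_signD1.
- exact: totD2_signD1.
- exact: totD2_signD1.
- by move=> ? ?; apply: totD2_exact.
- by move=> ? ?; apply: signed_receptor.
- by move=> ? ?; apply: signed_donor.
Qed.

End SignedTotalComplex.

Lemma totD_exact (A B : AbCat) (S : ExactSumFunctor A B) (D : DoubleComplex A) :
  rowsExact D -> colsExact D -> weaklyBounded D ->
  forall k, exactAt (totD D S (k + 1)) (totD D S (k + 1 + 1)).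
Proof.
move=> rowsE colsE wb k; set s := odd (absz (k + 1 + 1)).
have -> : totD D S (k + 1 + 1) = totD2 D S (k + 1 + 1) + signD1 S D s (k + 1 + 1) by [].
have -> : totD D S (k + 1) = totD2 D S (k + 1) - signD1 S D s (k + 1).
  by rewrite /totD /signD1 /s (odd_absz_add1 (k + 1)); case: (odd _); rewrite ?opprK.
exact: signed_total_exact.
Qed.

Theorem corollary6p3 (A B : AbCat) (S : ExactSumFunctor A B) (D : DoubleComplex A) :
  rowsExact D -> colsExact D -> weaklyBounded D ->
  forall n : int, isZeroObj (Htot D S n).
Proof.
move=> rowsE colsE wb n; rewrite /Htot; move: (sub1K n).
set m := n - 1; clearbody m => mn; case: n / mn; rewrite castF_refl comp1m.
rewrite (_ : m = m - 1 + 1); last by rewrite subrK.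
exact/exact_homology0/totD_exact.
Qed.
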